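(* Assume $x_j(0)<\tau$ and $y_j(0)=0$ for all individuals $j$. Then the system is in the no action state if and only if $\sigma_A\max_j\alpha_j-\sigma_S\mu_S\le 0$, i.e. the individual with the largest $\alpha$ satisfies $\sigma_A\alpha_i-\sigma_S\mu_S\le 0$.
   Context: Model: Fix an integer $n\ge 2$ (number of individuals) and parameters $\sigma_A,\sigma_S\ge 0$, $\sigma_C>0$, $\mu_S\in[0,1]$, $\mu_C>0$, $r>0$, $\tau\in(0,1)$, $\alpha_1,\dots,\alpha_n\in(-1,1)$. Individual $i$ has state $(x_i(t),y_i(t))$, $x_i\in(-1,1)$, $y_i\in[0,1]$, and $\gamma_i(t)=\frac{1}{n-1}\sum_{j\neq i}y_j(t)$. Between action events the state evolves by $\dot x_i=[\sigma_A\alpha_i+\sigma_S(\gamma_i-\mu_S)]\,\sigma_C(\gamma_i+\mu_C)(1-x_i)(1+x_i)$, $\dot y_i=-ry_i$. Individual $i$ ''acts'' at a time $t$ when $x_i(t)$ reaches the threshold $\tau$ (i.e. $x_i(t)\ge\tau$); immediately afterwards $x_i$ is reset to $0$ and $y_i$ is reset to $1$, and the continuous evolution resumes from the new state. The system is in the ''no action state'' if no individual ever acts. *)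

From Stdlib Require Import Reals List.
From Coquelicot Require Import Coquelicot.
Import ListNotations.
Open Scope R_scope.

Definition gamma (n : nat) (y : nat -> R -> R) (i : nat) (t : R) : R :=
  / INR (n - 1) *
  fold_right Rplus 0
    (map (fun j => y j t) (filter (fun j => negb (Nat.eqb j i)) (seq 0 n))).

(* max_{j < n} alpha_j  (n >= 1 assumed where used) *)
Definition alpha_max (n : nat) (alpha : nat -> R) : R :=
  fold_right Rmax (alpha 0%nat) (map alpha (seq 0 n)).

(* A solution on [0, +oo) of the continuous (between-actions) evolution,
   i.e. without any reset: right-continuous at 0, and satisfying the ODEs
   at every t > 0. *)
Definition flow_solution (n : nat) (sA sS sC muS muC r : R)
    (alpha : nat -> R) (x y : nat -> R -> R) : Prop :=
  forall i, (i < n)%nat ->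
    filterlim (x i) (at_right 0) (locally (x i 0)) /\
    filterlim (y i) (at_right 0) (locally (y i 0)) /\
    (forall t, 0 < t ->
       is_derive (x i) t
         ((sA * alpha i + sS * (gamma n y i t - muS))
            * (sC * (gamma n y i t + muC))
            * ((1 - x i t) * (1 + x i t)))
       /\ is_derive (y i) t (- r * y i t)).

(* No action state: starting from (x0, y0), the continuous evolution never
   brings any x_i to the threshold tau (the first action would occur at the
   first time some x_i(t) >= tau along this evolution). *)
Definition no_action_state (n : nat) (sA sS sC muS muC r tau : R)
    (alpha x0 y0 : nat -> R) : Prop :=
  forall x y : nat -> R -> R,
    flow_solution n sA sS sC muS muC r alpha x y ->
    (forall i, (i < n)%nat -> x i 0 = x0 i /\ y i 0 = y0 i) ->
    forall i t, (i < n)%nat -> 0 <= t -> x i t < tau.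

(* If [sA max alpha - sS muS <= 0]: each [y_j] starts at 0 and obeys [y' = -r y],
   so [y = 0], [gamma = 0], and every [x_i] obeys [x' = k_i (1 - x^2)] with
   [k_i = (sA alpha_i - sS muS) sC muC <= 0].  Then [x - x^3/3] is nonincreasing
   along [x_i], and since it is increasing on [-1, 1] this keeps [x_i] below
   [tau].  Conversely, if [k_i > 0] for a maximising [i], then
   [x_i(t) = tanh (k_i t + artanh x_i(0))], [y = 0] is a solution of the
   continuous evolution, and it crosses [tau < 1] in finite time. *)

From Stdlib Require Import Reals List Lra Lia.
From Coquelicot Require Import Coquelicot.
Open Scope R_scope.

Lemma at_right_ex_lt (f : R -> R) (l c t : R) :
  filterlim f (at_right 0) (locally l) -> l < c -> 0 < t ->
  exists u, 0 < u < t /\ f u < c.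
Proof.
  intros Hf Hlc Ht.
  assert (Hnear : at_right 0 (fun u => (0 < u /\ u < t) /\ f u < c)).
  { apply filter_and; [|exact (Hf _ (open_lt c l Hlc))].
    exists (mkposreal t Ht). intros u Hu Hpos. split; [exact Hpos|].
    apply Rabs_def2 in Hu. simpl in Hu. unfold minus, plus, opp in Hu; simpl in Hu. lra. }
  destruct (filter_ex _ Hnear) as [u Hu]. exists u. exact Hu.
Qed.

Lemma nonincreasing_of_derive_nonpos (g dg : R -> R) (a b u v : R) :
  (forall x, a < x < b -> is_derive g x (dg x)) ->
  (forall x, a < x < b -> dg x <= 0) ->
  a < u -> u <= v -> v < b -> g v <= g u.
Proof.
  intros Hg Hdg Hau Huv Hvb.
  destruct (MVT_gen g u v dg) as [w [Hw Hmvt]];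
    rewrite ?Rmin_left, ?Rmax_right in * by lra.
  - intros x Hx. apply Hg. lra.
  - intros x Hx. apply continuity_pt_filterlim, (@ex_derive_continuous R_AbsRing R_NormedModule).
    exists (dg x). apply Hg. lra.
  - assert (dg w * (v - u) <= 0) by (apply Rmult_le_0_r; [apply Hdg|]; lra). lra.
Qed.

Lemma le_right_lim_of_derive_nonpos (g dg : R -> R) (l : R) :
  filterlim g (at_right 0) (locally l) ->
  (forall t, 0 < t -> is_derive g t (dg t)) ->
  (forall t, 0 < t -> dg t <= 0) ->
  forall t, 0 < t -> g t <= l.
Proof.
  intros Hl Hg Hdg t Ht.
  destruct (Rle_or_lt (g t) l) as [Hle|Hlt]; [exact Hle|exfalso].
  destruct (at_right_ex_lt g l (g t) t Hl Hlt Ht) as [u [Hu Hgu]].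
  assert (g t <= g u).
  { apply (nonincreasing_of_derive_nonpos g dg 0 (t + 1));
      [intros x Hx; apply Hg | intros x Hx; apply Hdg | ..]; lra. }
  lra.
Qed.

Lemma decay_from_zero (y : R -> R) (r : R) : 0 <= r ->
  filterlim y (at_right 0) (locally 0) ->
  (forall t, 0 < t -> is_derive y t (- r * y t)) ->
  forall t, 0 < t -> y t = 0.
Proof.
  intros Hr Hy0 Hy t Ht.
  assert (Hsq : y t * y t <= 0).
  { apply (le_right_lim_of_derive_nonpos (fun u => y u * y u)
             (fun u => - r * y u * (2 * y u))); [| |intros u _; nra|exact Ht].
    - assert (Hcont : continuous (fun z => z * z) 0).
      { apply (@ex_derive_continuous R_AbsRing R_NormedModule). auto_derive. exact I. }
      unfold continuous in Hcont. rewrite Rmult_0_l in Hcont.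
      exact (filterlim_comp _ _ _ _ _ _ _ _ Hy0 Hcont).
    - intros u Hu. apply (is_derive_comp (fun z => z * z) y); [|exact (Hy u Hu)].
      auto_derive; [exact I | ring]. }
  nra.
Qed.

Definition cubic (u : R) : R := u - u ^ 3 / 3.

Lemma cubic_lt (a b : R) : -1 <= a -> a < b -> b <= 1 -> cubic a < cubic b.
Proof.
  intros Ha Hab Hb. unfold cubic.
  assert (b ^ 3 / 3 - a ^ 3 / 3 = (b - a) * ((b * b + a * b + a * a) / 3)) by field.
  assert (b * b + a * b + a * a < 3) by nra.
  nra.
Qed.

Lemma logistic_nonpos_stays_below (x k : R -> R) (x0 c : R) :
  filterlim x (at_right 0) (locally x0) ->
  (forall t, 0 < t -> is_derive x t (k t * ((1 - x t) * (1 + x t)))) ->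
  (forall t, 0 < t -> k t <= 0) ->
  -1 <= x0 -> x0 < c -> c <= 1 ->
  forall t, 0 < t -> x t < c.
Proof.
  intros Hx0 Hx Hk Hx0m Hx0c Hc t Ht.
  assert (Hcont : forall u, 0 < u -> continuity_pt x u).
  { intros u Hu. apply continuity_pt_filterlim, (@ex_derive_continuous R_AbsRing R_NormedModule).
    eexists. exact (Hx u Hu). }
  (* [(cubic o x)' = k (1 - x^2)^2 <= 0] whatever the sign of [1 - x^2]:
     no a priori bound [-1 < x < 1] on the solution is needed. *)
  assert (Hcubic : forall u, 0 < u -> cubic (x u) <= cubic x0).
  { apply (le_right_lim_of_derive_nonpos (fun u => cubic (x u))
             (fun u => k u * ((1 - x u) * (1 + x u)) * (1 - x u ^ 2))).
    - assert (Hc0 : continuous cubic x0).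
      { apply (@ex_derive_continuous R_AbsRing R_NormedModule).
        unfold cubic. auto_derive. exact I. }
      exact (filterlim_comp _ _ _ _ _ _ _ _ Hx0 Hc0).
    - intros u Hu. apply (is_derive_comp cubic x); [|exact (Hx u Hu)].
      unfold cubic. auto_derive; [exact I | field].
    - intros u Hu. pose proof (Hk u Hu).
      replace (k u * ((1 - x u) * (1 + x u)) * (1 - x u ^ 2))
        with (k u * ((1 - x u ^ 2) * (1 - x u ^ 2))) by ring.
      apply Rmult_le_0_r; [lra | apply Rle_0_sqr]. }
  destruct (Rlt_or_le (x t) c) as [Hlt|Hge]; [exact Hlt|exfalso].
  assert (Hcross : exists v, 0 < v /\ x v = c).
  { destruct (Req_dec (x t) c) as [Heq|Hne]; [exists t; auto|].
    destruct (at_right_ex_lt x x0 c t Hx0 Hx0c Ht) as [u [Hu Hxu]].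
    destruct (IVT_Rbar_incr x u t (x u) (x t) c) as [v [Hv [_ Hxv]]];
      [apply is_lim_continuity, Hcont; lra | apply is_lim_continuity, Hcont; lra
      | intros w Hw1 Hw2; apply Hcont; simpl in *; lra | simpl; lra | simpl; lra | ].
    exists v. simpl in Hv. split; [lra | exact Hxv]. }
  destruct Hcross as [v [Hv Hxv]].
  pose proof (Hcubic v Hv) as Hle. rewrite Hxv in Hle.
  pose proof (cubic_lt x0 c Hx0m Hx0c Hc). lra.
Qed.

Lemma tanh_exp2 (u : R) : tanh u = 1 - 2 / (exp (2 * u) + 1).
Proof.
  unfold tanh, sinh, cosh.
  replace (2 * u) with (u + u) by ring.
  rewrite exp_plus, exp_Ropp.
  pose proof (exp_pos u). field. nra.
Qed.

Definition artanh (z : R) : R := ln ((1 + z) / (1 - z)) / 2.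

Lemma tanh_artanh (z : R) : -1 < z < 1 -> tanh (artanh z) = z.
Proof.
  intros Hz. rewrite tanh_exp2. unfold artanh.
  replace (2 * (ln ((1 + z) / (1 - z)) / 2)) with (ln ((1 + z) / (1 - z))) by field.
  rewrite exp_ln by (apply Rdiv_lt_0_compat; lra).
  field. lra.
Qed.

Lemma is_derive_tanh (u : R) : is_derive tanh u ((1 - tanh u) * (1 + tanh u)).
Proof.
  apply (is_derive_ext (fun v => 1 - 2 / (exp (2 * v) + 1))).
  { intros v. symmetry. apply tanh_exp2. }
  rewrite tanh_exp2. pose proof (exp_pos (2 * u)).
  auto_derive; [lra | field; lra].
Qed.

Lemma tanh_le (u v : R) : u <= v -> tanh u <= tanh v.
Proof.
  intros Huv. destruct (Req_dec u v) as [->|Hne]; [lra|].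
  rewrite !tanh_exp2.
  assert (exp (2 * u) < exp (2 * v)) by (apply exp_increasing; lra).
  pose proof (exp_pos (2 * u)).
  assert (2 / (exp (2 * v) + 1) <= 2 / (exp (2 * u) + 1)).
  { apply Rmult_le_compat_l; [lra|]. apply Rinv_le_contravar; lra. }
  lra.
Qed.

Lemma is_derive_tanh_affine (k a t : R) :
  is_derive (fun s => tanh (k * s + a)) t
    (k * ((1 - tanh (k * t + a)) * (1 + tanh (k * t + a)))).
Proof.
  apply (is_derive_comp tanh (fun s => k * s + a)); [apply is_derive_tanh|].
  auto_derive; [exact I | ring].
Qed.

Lemma sum_map_zero (f : nat -> R) (l : list nat) :
  (forall j, In j l -> f j = 0) -> fold_right Rplus 0 (map f l) = 0.
Proof.
  induction l as [|a l IH]; simpl; intros Hf; [reflexivity|].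
  rewrite Hf, IH by auto. ring.
Qed.

Lemma gamma_eq0 (n : nat) (y : nat -> R -> R) (i : nat) (t : R) :
  (forall j, (j < n)%nat -> y j t = 0) -> gamma n y i t = 0.
Proof.
  intros Hy. unfold gamma. rewrite sum_map_zero; [ring|].
  intros j Hj. apply filter_In in Hj. destruct Hj as [Hj _].
  apply in_seq in Hj. apply Hy. lia.
Qed.

Lemma fold_Rmax_ge (alpha : nat -> R) (d : R) (l : list nat) (j : nat) :
  In j l -> alpha j <= fold_right Rmax d (map alpha l).
Proof.
  induction l as [|a l IH]; simpl; [tauto|].
  intros [->|Hj]; [apply Rmax_l|].
  eapply Rle_trans; [apply IH, Hj | apply Rmax_r].
Qed.

Lemma fold_Rmax_attained (alpha : nat -> R) (d : R) (l : list nat) :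
  fold_right Rmax d (map alpha l) = d \/
  exists j, In j l /\ fold_right Rmax d (map alpha l) = alpha j.
Proof.
  induction l as [|a l IH]; simpl; [auto|].
  destruct (Rle_lt_dec (alpha a) (fold_right Rmax d (map alpha l))) as [Hle|Hlt].
  - rewrite Rmax_right by exact Hle.
    destruct IH as [H|[j [Hj H]]]; [left | right; exists j]; auto.
  - rewrite Rmax_left by lra. right. exists a. auto.
Qed.

Lemma alpha_max_ge (n : nat) (alpha : nat -> R) (j : nat) :
  (j < n)%nat -> alpha j <= alpha_max n alpha.
Proof. intros Hj. apply fold_Rmax_ge, in_seq. lia. Qed.

Lemma alpha_max_attained (n : nat) (alpha : nat -> R) :
  (1 <= n)%nat -> exists i, (i < n)%nat /\ alpha_max n alpha = alpha i.
Proof.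
  intros Hn.
  destruct (fold_Rmax_attained alpha (alpha 0%nat) (seq 0 n)) as [H|[j [Hj H]]].
  - exists 0%nat. split; [lia | exact H].
  - apply in_seq in Hj. exists j. split; [lia | exact H].
Qed.

Lemma no_action_state_sufficient (n : nat) (sA sS sC muS muC r tau : R)
    (alpha x0 y0 : nat -> R) :
  0 <= sA -> 0 <= sS -> 0 < sC -> 0 < muC -> 0 <= r -> tau <= 1 ->
  (forall j, (j < n)%nat -> -1 < x0 j) ->
  (forall j, (j < n)%nat -> x0 j < tau) ->
  (forall j, (j < n)%nat -> y0 j = 0) ->
  sA * alpha_max n alpha - sS * muS <= 0 ->
  no_action_state n sA sS sC muS muC r tau alpha x0 y0.
Proof.
  intros HsA HsS HsC HmuC Hr Htau Hx0 Hx0tau Hy0 Hmax x y Hflow Hinit i t Hi Ht.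
  destruct (Hinit i Hi) as [Hxi0 _].
  destruct (Req_dec t 0) as [->|Ht0]; [rewrite Hxi0; apply Hx0tau, Hi|].
  assert (Hgamma : forall u, 0 < u -> gamma n y i u = 0).
  { intros u Hu. apply gamma_eq0. intros j Hj.
    destruct (Hflow j Hj) as [_ [Hyj Hdj]].
    destruct (Hinit j Hj) as [_ Hyj0]. rewrite Hyj0, Hy0 in Hyj by exact Hj.
    apply (decay_from_zero (y j) r); [exact Hr | exact Hyj | | exact Hu].
    intros s Hs. apply Hdj, Hs. }
  destruct (Hflow i Hi) as [Hxi _]. rewrite Hxi0 in Hxi.
  apply (logistic_nonpos_stays_below (x i)
           (fun u => (sA * alpha i + sS * (gamma n y i u - muS))
                       * (sC * (gamma n y i u + muC))) (x0 i));
    [exact Hxi | intros u Hu; apply (Hflow i Hi), Hu | | apply Rlt_le, Hx0, Hi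
    | apply Hx0tau, Hi | exact Htau | lra].
  intros u Hu. rewrite Hgamma by exact Hu.
  assert (sA * alpha i <= sA * alpha_max n alpha)
    by (apply Rmult_le_compat_l; [exact HsA | apply alpha_max_ge, Hi]).
  apply Rmult_le_0_r; nra.
Qed.

Lemma tanh_affine_reaches (k a c : R) : 0 < k -> -1 < c < 1 ->
  exists t, 0 <= t /\ c <= tanh (k * t + a).
Proof.
  intros Hk Hc.
  exists (Rmax 0 ((artanh c - a) / k)). split; [apply Rmax_l|].
  rewrite <- (tanh_artanh c Hc) at 1. apply tanh_le.
  assert (Ht : (artanh c - a) / k <= Rmax 0 ((artanh c - a) / k)) by apply Rmax_r.
  apply (Rmult_le_compat_l k) in Ht; [|lra].
  replace (k * ((artanh c - a) / k)) with (artanh c - a) in Ht by (field; lra).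
  lra.
Qed.

(* With [y = 0] the equations decouple into [x_j' = k_j (1 - x_j^2)], solved by [tanh]. *)
Lemma tanh_flow_solution (n : nat) (sA sS sC muS muC r : R) (alpha x0 : nat -> R) :
  flow_solution n sA sS sC muS muC r alpha
    (fun j t => tanh ((sA * alpha j - sS * muS) * (sC * muC) * t + artanh (x0 j)))
    (fun _ _ => 0).
Proof.
  intros j Hj. split; [|split].
  - apply (filterlim_filter_le_1 (F := locally 0)); [apply filter_le_within|].
    exact (@ex_derive_continuous R_AbsRing R_NormedModule _ 0
             (ex_intro _ _ (is_derive_tanh_affine _ _ 0))).
  - exact (@filterlim_const R R_UniformSpace (at_right 0) _ 0).
  - intros t Ht. rewrite gamma_eq0 by reflexivity. split.
    + replace ((sA * alpha j + sS * (0 - muS)) * (sC * (0 + muC)))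
        with ((sA * alpha j - sS * muS) * (sC * muC)) by ring.
      apply is_derive_tanh_affine.
    + auto_derive; [exact I | ring].
Qed.

Lemma no_action_state_necessary (n : nat) (sA sS sC muS muC r tau : R)
    (alpha x0 y0 : nat -> R) :
  (1 <= n)%nat -> 0 < sC -> 0 < muC -> -1 < tau < 1 ->
  (forall j, (j < n)%nat -> -1 < x0 j < 1) ->
  (forall j, (j < n)%nat -> y0 j = 0) ->
  no_action_state n sA sS sC muS muC r tau alpha x0 y0 ->
  sA * alpha_max n alpha - sS * muS <= 0.
Proof.
  intros Hn HsC HmuC Htau Hx0 Hy0 Hna.
  destruct (Rle_or_lt (sA * alpha_max n alpha - sS * muS) 0) as [Hle|Hpos];
    [exact Hle | exfalso].
  destruct (alpha_max_attained n alpha Hn) as [i [Hi Hmax]].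
  assert (Hk : 0 < (sA * alpha i - sS * muS) * (sC * muC)).
  { rewrite <- Hmax. apply Rmult_lt_0_compat; [lra | nra]. }
  destruct (tanh_affine_reaches _ (artanh (x0 i)) tau Hk Htau) as [t [Ht Hreach]].
  assert (Hinit : forall j, (j < n)%nat ->
    tanh ((sA * alpha j - sS * muS) * (sC * muC) * 0 + artanh (x0 j)) = x0 j
    /\ 0 = y0 j).
  { intros j Hj. rewrite Rmult_0_r, Rplus_0_l, Hy0 by exact Hj.
    split; [apply tanh_artanh, Hx0, Hj | reflexivity]. }
  pose proof (Hna _ _ (tanh_flow_solution n sA sS sC muS muC r alpha x0) Hinit i t Hi Ht).
  simpl in *. lra.
Qed.

Theorem corollary4 (n : nat) (sA sS sC muS muC r tau : R)
    (alpha x0 y0 : nat -> R)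
    (Hn : (2 <= n)%nat)
    (HsA : 0 <= sA) (HsS : 0 <= sS) (HsC : 0 < sC)
    (HmuS : 0 <= muS <= 1) (HmuC : 0 < muC) (Hr : 0 < r)
    (Htau : 0 < tau < 1)
    (Halpha : forall j, (j < n)%nat -> -1 < alpha j < 1)
    (Hx0 : forall j, (j < n)%nat -> -1 < x0 j < 1)
    (Hx0tau : forall j, (j < n)%nat -> x0 j < tau)
    (Hy0 : forall j, (j < n)%nat -> y0 j = 0) :
  no_action_state n sA sS sC muS muC r tau alpha x0 y0 <->
  sA * alpha_max n alpha - sS * muS <= 0.
Proof.
  split.
  - apply no_action_state_necessary; [lia | exact HsC | exact HmuC | lra | exact Hx0 | exact Hy0].
  - apply no_action_state_sufficient; try assumption; [lra | lra | intros j Hj; apply Hx0, Hj].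
Qed.
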